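(* The category $\mathbb S^{\mathrm{m},\mathbb P}_r$ is $\mathbf{Ord}$-enriched, i.e. its sequential composition $;$ is monotone in both arguments with respect to the orders on hom-sets. Moreover, the sum $\oplus$ and the trace operator $\mathrm{tr}$ are monotone.
   Context: Notation: $[k]=\{1,\dots,k\}$; $T(X)=X+\mathbb R\times X+\{\exists^*,\forall^*\}$; diagrammatic composition. $\mathbb S^{\mathrm{m},\mathbb P}_r$ has natural numbers as objects; an arrow $f:m\to n$ is a function $f:[m]\to T([n])$ such that for all $i\ne j$ in $[m]$, $f(i)\notin[n]$ or $f(j)\notin\{f(i)\}\cup\mathbb R\times\{f(i)\}$. On $T([n])$ let $\le$ be the least order with $(r_1,i)\le(r_2,i)$ whenever $r_1\ge r_2$ and $i\in[n]$, $\exists^*\le z$ and $z\le\forall^*$ for all $z\in T([n])$; hom-sets are ordered pointwise ($f\le g$ iff $f(i)\le g(i)$ for all $i$). Operations: $(f;g)(i)=f(i)$ if $f(i)\in\{\exists^*,\forall^*\}$; $g(j)$ if $f(i)=j\in[l]$; $g(j)$ if $f(i)=(r,j)$ and $g(j)\in\{\exists^*,\forall^*\}$; $(r,k)$ if $f(i)=(r,j)$, $g(j)=k$; $(r+r',k)$ if $f(i)=(r,j)$, $g(j)=(r',k)$. $(f\oplus g)(i)=f(i)$ ($i\le m$), $(f\oplus g)(m+i)$ is $g(i)$ with its index $j$ (if any) shifted to $n+j$ (for $f:m\to n$). Trace of $f:l+m\to l+n$ at $i\in[m]$: $v_0=l+i$; if $j=0$ or $v_j\in[l]$ then $v_{j+1}=f(v_j)$;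 if $v_j=(r,k)$, $k\in[l]$, then $v_{j+1}=f(k)$; otherwise stop at $v_j$. If finite $(v_0,..,v_K)$ and $S$ is the sum of first components of $v_j\in\mathbb R\times[l+n]$, $1\le j\le K$: value $v_K$ if $v_K\in\{\exists^*,\forall^*\}$; $k$ if $v_K=l+k$ and $v_j\in[l]$ for $1\le j<K$; $(S,k)$ if $v_K=l+k$ and some earlier $v_j\in\mathbb R\times[l]$; $(S,k)$ if $v_K=(r,l+k)$. If infinite, with $w'_1,w'_2,..$ the first components of the (infinitely many) entries in $\mathbb R\times[l]$: $\exists^*$ if $\liminf_N\frac1N\sum_{t\le N}w'_t\ge0$, else $\forall^*$. *)

From Stdlib Require Import Reals ClassicalEpsilon.
From Coquelicot Require Import Coquelicot.
From mathcomp Require Import ssreflect ssrfun ssrbool eqtype ssrnat seq fintype.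

Set Implicit Arguments.
Unset Strict Implicit.
Unset Printing Implicit Defensive.

(* [n] = {1,..,n} is represented by the ordinal type 'I_n = {0,..,n-1}.   *)
Inductive T (X : Type) : Type :=
  | Idx : X -> T X
  | Wt  : R -> X -> T X
  | Ex  : T X
  | All : T X.
Arguments Ex {X}.
Arguments All {X}.

Definition Tmap (X Y : Type) (h : X -> Y) (x : T X) : T Y :=
  match x with
  | Idx k => Idx (h k)
  | Wt r k => Wt r (h k)
  | Ex => Ex
  | All => All
  end.

Definition rawhom (m n : nat) := 'I_m -> T 'I_n.

Definition is_arrow (m n : nat) (f : rawhom m n) : Prop :=
  forall (i j : 'I_m) (k : 'I_n), i <> j -> f i = Idx k ->
    f j <> Idx k /\ (forall r : R, f j <> Wt r k).

(* The order on T([n]): least order with (r1,i) <= (r2,i) when r1 >= r2,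
   exists* <= z, z <= forall*.  (This relation is already reflexive,
   antisymmetric and transitive, so it is that least order.) *)
Definition leT (X : Type) (x y : T X) : Prop :=
  x = y
  \/ (exists (r1 r2 : R) (k : X), x = Wt r1 k /\ y = Wt r2 k /\ (r1 >= r2)%R)
  \/ x = Ex
  \/ y = All.

Definition le_hom (m n : nat) (f g : rawhom m n) : Prop :=
  forall i : 'I_m, leT (f i) (g i).

Definition seqcomp (m l n : nat) (f : rawhom m l) (g : rawhom l n) : rawhom m n :=
  fun i =>
    match f i with
    | Ex => Ex
    | All => All
    | Idx j => g j
    | Wt r j =>
        match g j with
        | Ex => Ex
        | All => All
        | Idx k => Wt r k
        | Wt r' k => Wt (r + r')%R k
        end
    end.

Definition osum (m n m' n' : nat) (f : rawhom m n) (g : rawhom m' n')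
  : rawhom (m + m') (n + n') :=
  fun i =>
    match split i with
    | inl j => Tmap (lshift n') (f j)
    | inr j => Tmap (@rshift n n') (g j)
    end.

Section Trace.
Variables (l m n : nat) (f : rawhom (l + m) (l + n)) (i : 'I_m).

(* One step of the trace walk; None = stop. *)
Definition tr_next (x : T 'I_(l + n)) : option (T 'I_(l + n)) :=
  match x with
  | Idx k | Wt _ k =>
      match split k with
      | inl k' => Some (f (lshift m k'))
      | inr _ => None
      end
  | _ => None
  end.

(* tr_v j is the paper's v_{j+1}  (v_0 = l+i, v_1 = f(l+i)).
   Once stopped, the sequence stays constant. *)
Fixpoint tr_v (j : nat) : T 'I_(l + n) :=
  match j with
  | O => f (@rshift l m i)
  | S j' => match tr_next (tr_v j') with Some y => y | None => tr_v j' end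
  end.

Definition stopb (p : nat) : bool :=
  match tr_next (tr_v p) with None => true | Some _ => false end.

Definition wt_of (X : Type) (x : T X) : R :=
  match x with Wt r _ => r | _ => 0%R end.

Definition is_wtb (X : Type) (x : T X) : bool :=
  match x with Wt _ _ => true | _ => false end.

Definition is_idxb (X : Type) (x : T X) : bool :=
  match x with Idx _ => true | _ => false end.

(* Value in the finite case, with p + 1 = K (so v_K = tr_v p). *)
Definition tr_finite_value (p : nat) : T 'I_n :=
  let S := foldr (fun j acc => (wt_of (tr_v j) + acc)%R) 0%R (iota 0 p.+1) in
  match tr_v p with
  | Ex => Ex
  | All => All
  | Idx k =>
      match split k with
      | inr k' =>
          if all (fun q => is_idxb (tr_v q)) (iota 0 p) then Idx k' else Wt S k'
      | inl _ => Ex (* unreachable: the walk stops only outside [l] *)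
      end
  | Wt _ k =>
      match split k with
      | inr k' => Wt S k'
      | inl _ => Ex (* unreachable *)
      end
  end.

Definition next_wt (j : nat) : nat :=
  match excluded_middle_informative (exists j', (j <= j')%N && is_wtb (tr_v j')) with
  | left H => ex_minn H
  | right _ => 0
  end.

Fixpoint wt_pos (t : nat) : nat :=
  match t with
  | O => next_wt 0
  | S t' => next_wt (wt_pos t').+1
  end.

Definition wprime (t : nat) : R := wt_of (tr_v (wt_pos t)).

Definition wavg (N : nat) : R := (sum_f_R0 wprime N / INR N.+1)%R.

Definition trace_at : T 'I_n :=
  match excluded_middle_informative (exists p, stopb p) with
  | left H => tr_finite_value (ex_minn H)
  | right _ =>
      if excluded_middle_informative (Rbar_le (Rbar.Finite 0%R) (LimInf_seq wavg))
      then Ex else All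
  end.

End Trace.

Definition trace (l m n : nat) (f : rawhom (l + m) (l + n)) : rawhom m n :=
  fun i => trace_at f i.

From Stdlib Require Import Reals Lra Classical ClassicalEpsilon.
From Coquelicot Require Import Coquelicot.
From mathcomp Require Import ssreflect ssrfun ssrbool eqtype ssrnat seq fintype.

Set Implicit Arguments.
Unset Strict Implicit.
Unset Printing Implicit Defensive.

(* T is a monad (weights add up, [Ex] and [All] are absorbing), [seqcomp] is
   its Kleisli composition and [osum] acts through [Tmap]; both are monotone
   because the order on T only lowers weights, puts [Ex] at the bottom and
   [All] at the top.  For the trace compare the walks of [f <= f'] step by
   step: if the walk of [f] ever meets [Ex], or that of [f'] meets [All], the
   traces are the bottom resp. the top.  Otherwise the two walks visit the same
   indices in the same way, differing only by weights that are larger along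
   [f]; so they stop at the same time, and the accumulated weight (finite walk)
   or the long-run average weight (infinite walk) of [f] dominates that of [f']. *)

Section Order.
Variable X : Type.
Implicit Types x y : T X.

Lemma leT_refl x : leT x x.
Proof. by left. Qed.

Lemma Ex_leT y : leT Ex y.
Proof. by right; right; left. Qed.

Lemma leT_All x : leT x All.
Proof. by right; right; right. Qed.

Lemma leT_Wt (r1 r2 : R) (k : X) : (r2 <= r1)%R -> leT (Wt r1 k) (Wt r2 k).
Proof. by move=> /Rle_ge le_r; right; left; exists r1, r2, k. Qed.

Variant leT_spec : T X -> T X -> Prop :=
  | LeTRefl x : leT_spec x x
  | LeTWt r1 r2 k of (r2 <= r1)%R : leT_spec (Wt r1 k) (Wt r2 k)
  | LeTEx y : leT_spec Ex y
  | LeTAll x : leT_spec x All.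

Lemma leTP x y : leT x y -> leT_spec x y.
Proof.
case=> [<-|[[r1 [r2 [k [-> [-> /Rge_le le_r]]]]]|[->|->]]]; by constructor.
Qed.

Variant same_shape : T X -> T X -> Prop :=
  | ShapeIdx k : same_shape (Idx k) (Idx k)
  | ShapeWt r1 r2 k of (r2 <= r1)%R : same_shape (Wt r1 k) (Wt r2 k).

Lemma leT_same_shape x y : leT x y -> x <> Ex -> y <> All -> same_shape x y.
Proof.
case/leTP=> [[k|r k| |]|r1 r2 k le_r|//|//] // _ _; constructor => //.
exact: Rle_refl.
Qed.

End Order.

Lemma leT_map (X Y : Type) (h : X -> Y) (x y : T X) :
  leT x y -> leT (Tmap h x) (Tmap h y).
Proof.
case/leTP=> [x'|r1 r2 k le_r|y'|x'] /=.
- exact: leT_refl.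
- exact: leT_Wt.
- exact: Ex_leT.
- exact: leT_All.
Qed.

Definition Tshift (X : Type) (r : R) (y : T X) : T X :=
  match y with
  | Idx k => Wt r k
  | Wt r' k => Wt (r + r') k
  | Ex => Ex
  | All => All
  end.

Definition Tbind (X Y : Type) (g : X -> T Y) (x : T X) : T Y :=
  match x with
  | Idx j => g j
  | Wt r j => Tshift r (g j)
  | Ex => Ex
  | All => All
  end.

Lemma seqcompE (m l n : nat) (f : rawhom m l) (g : rawhom l n) (i : 'I_m) :
  seqcomp f g i = Tbind g (f i).
Proof. by []. Qed.

Lemma leT_shift (X : Type) (r1 r2 : R) (y y' : T X) :
  (r2 <= r1)%R -> leT y y' -> leT (Tshift r1 y) (Tshift r2 y').
Proof.
move=> le_r /leTP [[k|r k| |]|s1 s2 k le_s|y0|x0] /=.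
- exact: leT_Wt.
- by apply: leT_Wt; lra.
- exact: leT_refl.
- exact: leT_refl.
- by apply: leT_Wt; lra.
- exact: Ex_leT.
- exact: leT_All.
Qed.

Lemma leT_bind (X Y : Type) (g g' : X -> T Y) (x x' : T X) :
  (forall j, leT (g j) (g' j)) -> leT x x' -> leT (Tbind g x) (Tbind g' x').
Proof.
move=> le_g /leTP [[j|r j| |]|r1 r2 j le_r|y|x0] /=.
- exact: le_g.
- exact/leT_shift/le_g/Rle_refl.
- exact: leT_refl.
- exact: leT_refl.
- exact: leT_shift.
- exact: Ex_leT.
- exact: leT_All.
Qed.

Lemma seqcomp_mono (m l n : nat) (f f' : rawhom m l) (g g' : rawhom l n) :
  le_hom f f' -> le_hom g g' -> le_hom (seqcomp f g) (seqcomp f' g').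
Proof. move=> le_f le_g i; rewrite !seqcompE; exact: leT_bind. Qed.

Lemma osum_mono (m n m' n' : nat) (f f' : rawhom m n) (g g' : rawhom m' n') :
  le_hom f f' -> le_hom g g' -> le_hom (osum f g) (osum f' g').
Proof. by move=> le_f le_g i; rewrite /osum; case: (split i) => j; apply: leT_map. Qed.

Section Walk.
Variables (l m n : nat) (g : rawhom (l + m) (l + n)) (i : 'I_m).

Lemma tr_v_stopped p q : stopb g i p -> (p <= q)%N -> tr_v g i q = tr_v g i p.
Proof.
move=> stop_p; elim: q => [|q IH]; first by rewrite leqn0 => /eqP ->.
rewrite leq_eqVlt => /orP [/eqP <- //|lt_pq] /=.
by move: stop_p; rewrite /stopb -(IH lt_pq); case: tr_next.
Qed.

Lemma trace_finite j :
  stopb g i j -> exists2 p, tr_v g i j = tr_v g i p & trace g i = tr_finite_value g i p.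
Proof.
move=> stop_j; rewrite /trace /trace_at.
case: excluded_middle_informative => [stops|]; last by case; exists j.
case: ex_minnP => p stop_p min_p; exists p => //.
exact: tr_v_stopped (min_p _ stop_j).
Qed.

Lemma trace_Ex j : tr_v g i j = Ex -> trace g i = Ex.
Proof.
move=> hit; have [|p hit_p ->] := @trace_finite j; first by rewrite /stopb hit.
by rewrite /tr_finite_value -hit_p hit.
Qed.

Lemma trace_All j : tr_v g i j = All -> trace g i = All.
Proof.
move=> hit; have [|p hit_p ->] := @trace_finite j; first by rewrite /stopb hit.
by rewrite /tr_finite_value -hit_p hit.
Qed.

End Walk.

Section TraceMonotone.
Variables (l m n : nat) (f f' : rawhom (l + m) (l + n)) (i : 'I_m).
Hypothesis le_f : le_hom f f'.

Lemma tr_v_mono j : leT (tr_v f i j) (tr_v f' i j).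
Proof.
elim: j => [|j IH] /=; first exact: le_f.
case/leTP: IH => [[k|r k| |]|r1 r2 k le_r|y|x] /=; try exact: leT_refl.
- by case: (split k) => k' /=; [apply: le_f|apply: leT_refl].
- by case: (split k) => k' /=; [apply: le_f|apply: leT_refl].
- by case: (split k) => k' /=; [apply: le_f|apply: leT_Wt].
- exact: Ex_leT.
- exact: leT_All.
Qed.

Hypothesis f_no_Ex : forall j, tr_v f i j <> Ex.
Hypothesis f'_no_All : forall j, tr_v f' i j <> All.

Lemma tr_v_same_shape j : same_shape (tr_v f i j) (tr_v f' i j).
Proof. by apply: leT_same_shape; [apply: tr_v_mono|apply: f_no_Ex|apply: f'_no_All]. Qed.

Lemma stopb_eq : stopb f i =1 stopb f' i.
Proof.
by move=> p; rewrite /stopb; case: (tr_v_same_shape p) => [k|r1 r2 k _] /=; case: split.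
Qed.

Lemma is_wtb_eq p : is_wtb (tr_v f i p) = is_wtb (tr_v f' i p).
Proof. by case: (tr_v_same_shape p). Qed.

Lemma is_idxb_eq p : is_idxb (tr_v f i p) = is_idxb (tr_v f' i p).
Proof. by case: (tr_v_same_shape p). Qed.

Lemma wt_of_ge p : (wt_of (tr_v f' i p) <= wt_of (tr_v f i p))%R.
Proof. by case: (tr_v_same_shape p) => [k|r1 r2 k le_r] //=; apply: Rle_refl. Qed.

Lemma weight_sum_ge s :
  (foldr (fun j acc => wt_of (tr_v f' i j) + acc) 0 s <=
   foldr (fun j acc => wt_of (tr_v f i j) + acc) 0 s)%R.
Proof. elim: s => [|q s IH] /=; first lra. by have := wt_of_ge q; lra. Qed.

Lemma tr_finite_value_mono p : leT (tr_finite_value f i p) (tr_finite_value f' i p).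
Proof.
have sum_ge := weight_sum_ge (iota 0 p.+1).
have idx_eq : all (fun q => is_idxb (tr_v f i q)) (iota 0 p) =
              all (fun q => is_idxb (tr_v f' i q)) (iota 0 p).
  by apply: eq_all => q; rewrite is_idxb_eq.
rewrite /tr_finite_value idx_eq.
case: (tr_v_same_shape p) => [k|r1 r2 k _]; case: (split k) => k'; try exact: leT_refl.
- by case: ifP => _; [apply: leT_refl|apply: leT_Wt].
- exact: leT_Wt.
Qed.

Lemma next_wt_eq j : next_wt f i j = next_wt f' i j.
Proof.
have same_wt q : (j <= q)%N && is_wtb (tr_v f i q) = (j <= q)%N && is_wtb (tr_v f' i q).
  by rewrite is_wtb_eq.
rewrite /next_wt.
case: excluded_middle_informative => [wt|no_wt];
  case: excluded_middle_informative => [wt'|no_wt'] //.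
- exact: eq_ex_minn.
- by exfalso; apply: no_wt'; case: wt => q; rewrite same_wt; exists q.
- by exfalso; apply: no_wt; case: wt' => q; rewrite -same_wt; exists q.
Qed.

Lemma wt_pos_eq t : wt_pos f i t = wt_pos f' i t.
Proof. by elim: t => [|t IH] /=; rewrite ?IH next_wt_eq. Qed.

Lemma liminf_wavg_le : Rbar_le (LimInf_seq (wavg f' i)) (LimInf_seq (wavg f i)).
Proof.
apply: LimInf_le; exists 0%N => N _; rewrite /wavg.
apply: Rmult_le_compat_r.
- by apply/Rlt_le/Rinv_0_lt_compat/lt_0_INR/ltP.
- by apply: sum_Rle => t _; rewrite /wprime wt_pos_eq; apply: wt_of_ge.
Qed.

Lemma trace_mono_same_shape : leT (trace f i) (trace f' i).
Proof.
rewrite /trace /trace_at.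
case: excluded_middle_informative => [stops|runs];
  case: (excluded_middle_informative (exists p, stopb f' i p)) => [stops'|runs'].
- by rewrite (eq_ex_minn stops stops' stopb_eq); apply: tr_finite_value_mono.
- by exfalso; apply: runs'; case: stops => p; rewrite stopb_eq; exists p.
- by exfalso; apply: runs; case: stops' => p; rewrite -stopb_eq; exists p.
case: excluded_middle_informative => [_|neg] /=; first exact: Ex_leT.
case: excluded_middle_informative => [nonneg'|_] /=; last exact: leT_refl.
by exfalso; apply: neg; apply: Rbar_le_trans 0%R _ _ nonneg' liminf_wavg_le.
Qed.

End TraceMonotone.

Lemma trace_mono (l m n : nat) (f f' : rawhom (l + m) (l + n)) :
  le_hom f f' -> le_hom (trace f) (trace f').
Proof.
move=> le_f i.
case: (classic (exists j, tr_v f i j = Ex)) => [[j hit]|no_Ex].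
  by rewrite (trace_Ex hit); apply: Ex_leT.
case: (classic (exists j, tr_v f' i j = All)) => [[j hit]|no_All].
  by rewrite (trace_All hit); apply: leT_All.
by apply: trace_mono_same_shape => // j hit; [apply: no_Ex|apply: no_All]; exists j.
Qed.

Theorem propositionD3 :
  (forall (m l n : nat) (f f' : rawhom m l) (g g' : rawhom l n),
      is_arrow f -> is_arrow f' -> is_arrow g -> is_arrow g' ->
      le_hom f f' -> le_hom g g' -> le_hom (seqcomp f g) (seqcomp f' g'))
  /\
  (forall (m n m' n' : nat) (f f' : rawhom m n) (g g' : rawhom m' n'),
      is_arrow f -> is_arrow f' -> is_arrow g -> is_arrow g' ->
      le_hom f f' -> le_hom g g' -> le_hom (osum f g) (osum f' g'))
  /\
  (forall (l m n : nat) (f f' : rawhom (l + m) (l + n)),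
      is_arrow f -> is_arrow f' ->
      le_hom f f' -> le_hom (trace f) (trace f')).
Proof.
split; [|split].
- by move=> m l n f f' g g' _ _ _ _; apply: seqcomp_mono.
- by move=> m n m' n' f f' g g' _ _ _ _; apply: osum_mono.
- by move=> l m n f f' _ _; apply: trace_mono.
Qed.
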